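(* Let $D$ be a drawing in $[0,a]\times[0,b]$ whose nodes are all of the eleven types listed in the context, let $\ell$ be its number of segments, and write $N_\ast$ for the number of nodes of type $\ast$. Then (i) $2\ell=(N_{VE}+N_{VX}+2N_{VT}+3N_{VS}+3N_{VC})+(N_{HE}+N_{HX}+2N_{HT}+3N_{HS}+3N_{HC})+4N_{CR}$; (ii) $N_{VE}+N_{HS}+N_{HT}=N_{VX}+N_{HC}+N_{VT}$ and $N_{HE}+N_{VS}+N_{VT}=N_{HX}+N_{VC}+N_{HT}$.
   Context: A drawing in the box $[0,a]\times[0,b]$ is a finite collection of weighted segments $((x_-,y_-),(x_+,y_+),s)$, each vertical ($x_-=x_+$, $y_-<y_+$, traversed upward) or horizontal ($y_-=y_+$, $x_-<x_+$, traversed rightward), with real intensity $s$, whose endpoints are nodes, satisfying Kirchhoff's law at every interior node (sum of intensities of segments entering from south and west equals sum of those leaving to north and east). Node types: vertical entry (VE): a point $(x,0)$ where a vertical segment starts; vertical exit (VX): a point $(x,b)$ where a vertical segment ends; vertical split (VS): a point where exactly three segments meet, from the south, to the north and to the east; vertical turn (VT): a point where exactly a segment from the south and a segment to the east meet; vertical coalescence (VC): exactly three segments from the west, from the south and to the north; horizontal entry (HE): a point $(0,y)$ where a horizontal segment starts; horizontal exit (HX): a point $(a,y)$ where a horizontal segment ends; horizontal split (HS): exactly three segments, from the west, to the east and to the north; horizontal turn (HT): exactly a segment from the west and a segment to the north; horizontal coalescence (HC): exactly three segments, from the south, from the west and to the east; crossing (CR): four segments meeting (from west, from south, to north, to east).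 *)

From HB Require Import structures.
From mathcomp Require Import all_boot all_order all_algebra.
From mathcomp Require Import reals.
Set Implicit Arguments. Unset Strict Implicit. Unset Printing Implicit Defensive.
Import Order.TTheory GRing.Theory Num.Theory.
Local Open Scope ring_scope.

Section Drawing.
Variable R : realType.

(* A weighted segment ((x_-,y_-),(x_+,y_+),s). *)
Record segment := Seg { sx1 : R; sy1 : R; sx2 : R; sy2 : R; sint : R }.

Definition seg_start (s : segment) : R * R := (sx1 s, sy1 s).
Definition seg_end (s : segment) : R * R := (sx2 s, sy2 s).

Definition is_vertical (s : segment) : bool := (sx1 s == sx2 s) && (sy1 s < sy2 s).
Definition is_horizontal (s : segment) : bool := (sy1 s == sy2 s) && (sx1 s < sx2 s).

Definition in_box (a b : R) (p : R * R) : bool :=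
  (0 <= p.1 <= a) && (0 <= p.2 <= b).

Definition interior (a b : R) (p : R * R) : bool :=
  (0 < p.1 < a) && (0 < p.2 < b).

Definition nodes (D : seq segment) : seq (R * R) :=
  undup (flatten [seq [:: seg_start s; seg_end s] | s <- D]).

Definition n_from_south (D : seq segment) p :=
  count (fun s => is_vertical s && (seg_end s == p)) D.
Definition n_to_north (D : seq segment) p :=
  count (fun s => is_vertical s && (seg_start s == p)) D.
Definition n_from_west (D : seq segment) p :=
  count (fun s => is_horizontal s && (seg_end s == p)) D.
Definition n_to_east (D : seq segment) p :=
  count (fun s => is_horizontal s && (seg_start s == p)) D.

Definition is_drawing (a b : R) (D : seq segment) : Prop :=
  all (fun s => is_vertical s || is_horizontal s) D /\
  all (fun s => in_box a b (seg_start s) && in_box a b (seg_end s)) D /\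
  (* Kirchhoff's law at interior nodes: inflow (from south and west) = outflow (to north and east) *)
  (forall p, p \in nodes D -> interior a b p ->
     \sum_(s <- D | seg_end s == p) sint s = \sum_(s <- D | seg_start s == p) sint s).

Inductive node_type := VE | VX | VS | VT | VC | HE | HX | HS | HT | HC | CR.

Definition sig4 (D : seq segment) p (i j k l : nat) : bool :=
  [&& n_from_south D p == i, n_to_north D p == j,
      n_from_west D p == k & n_to_east D p == l].

Definition has_type (a b : R) (D : seq segment) (p : R * R) (t : node_type) : bool :=
  match t with
  | VE => (p.2 == 0) && sig4 D p 0 1 0 0
  | VX => (p.2 == b) && sig4 D p 1 0 0 0
  | VS => sig4 D p 1 1 0 1
  | VT => sig4 D p 1 0 0 1
  | VC => sig4 D p 1 1 1 0
  | HE => (p.1 == 0) && sig4 D p 0 0 0 1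
  | HX => (p.1 == a) && sig4 D p 0 0 1 0
  | HS => sig4 D p 0 1 1 1
  | HT => sig4 D p 0 1 1 0
  | HC => sig4 D p 1 0 1 1
  | CR => sig4 D p 1 1 1 1
  end.

Definition Ntype (a b : R) (D : seq segment) (t : node_type) : nat :=
  count (fun p => has_type a b D p t) (nodes D).

End Drawing.

(** Double counting of segment ends.  Every segment is either vertical or
horizontal, and it has exactly one start and one end, both of which are nodes.
Counting the vertical segments once by their ends and once by their starts,
and grouping the nodes by type, gives the first balance in (ii): a type fixes
the number of segments arriving from the south and leaving to the north, and
the eleven types have pairwise distinct signatures, so each node is counted
under exactly one type.  The horizontal segments give the second balance.
Adding all four counts counts every segment twice, which is (i). *)

From HB Require Import structures.
From mathcomp Require Import all_boot all_order all_algebra.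
From mathcomp Require Import reals.
From mathcomp Require Import zify.
Import Order.TTheory GRing.Theory Num.Theory.

Set Implicit Arguments.
Unset Strict Implicit.
Unset Printing Implicit Defensive.

Lemma sum_count_by_image (T : Type) (U : eqType) (P : pred T) (f : T -> U)
    (r : seq T) (L : seq U) :
  uniq L -> all (fun s => f s \in L) r ->
  (\sum_(u <- L) count (fun s => P s && (f s == u)) r = count P r)%N.
Proof.
move=> uniqL; elim: r => [|s r IHr] /=; first by rewrite big1.
case/andP=> fsL fL; rewrite big_split /= IHr //; congr (_ + _)%N.
case: (P s); last by rewrite big1.
transitivity (count_mem (f s) L); last by rewrite count_uniq_mem ?fsL.
rewrite -sum1_count [RHS]big_mkcond; apply: eq_bigr => u _.
by rewrite eq_sym /=; case: (u == f s).
Qed.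

Definition node_type_code (t : node_type) : nat :=
  match t with
  | VE => 0 | VX => 1 | VS => 2 | VT => 3 | VC => 4 | HE => 5
  | HX => 6 | HS => 7 | HT => 8 | HC => 9 | CR => 10
  end.

Definition node_type_of_code (n : nat) : option node_type :=
  match n with
  | 0 => Some VE | 1 => Some VX | 2 => Some VS | 3 => Some VT | 4 => Some VC
  | 5 => Some HE | 6 => Some HX | 7 => Some HS | 8 => Some HT | 9 => Some HC
  | 10 => Some CR | _ => None
  end%N.

Lemma node_type_codeK : pcancel node_type_code node_type_of_code.
Proof. by case. Qed.

#[hnf] HB.instance Definition _ := Equality.copy node_type (pcan_type node_type_codeK).

Definition node_types : seq node_type :=
  [:: VE; VX; VS; VT; VC; HE; HX; HS; HT; HC; CR].

Lemma filter_pred1_node_types (t : node_type) :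
  [seq t' <- node_types | t' == t] = [:: t].
Proof. by case: t. Qed.

Definition south_degree (t : node_type) : nat :=
  match t with VX | VS | VT | VC | HC | CR => 1 | _ => 0 end.
Definition north_degree (t : node_type) : nat :=
  match t with VE | VS | VC | HS | HT | CR => 1 | _ => 0 end.
Definition west_degree (t : node_type) : nat :=
  match t with HX | VC | HS | HT | HC | CR => 1 | _ => 0 end.
Definition east_degree (t : node_type) : nat :=
  match t with HE | VS | VT | HS | HC | CR => 1 | _ => 0 end.

Lemma node_type_degrees_inj (t t' : node_type) :
  south_degree t = south_degree t' -> north_degree t = north_degree t' ->
  west_degree t = west_degree t' -> east_degree t = east_degree t' -> t = t'.
Proof. by case: t; case: t'. Qed.

Section Drawing.
Variables (R : realType) (a b : R) (D : seq (segment R)).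

Lemma has_type_degrees p t : has_type a b D p t ->
  [/\ n_from_south D p = south_degree t, n_to_north D p = north_degree t,
      n_from_west D p = west_degree t & n_to_east D p = east_degree t].
Proof.
move=> pt; suff /and4P[/eqP-> /eqP-> /eqP-> /eqP->] :
    sig4 D p (south_degree t) (north_degree t) (west_degree t) (east_degree t)
  by [].
by case: t pt => //= /andP[].
Qed.

Lemma has_type_unique p t :
  has_type a b D p t -> forall t', has_type a b D p t' = (t' == t).
Proof.
move=> pt t'; apply/idP/eqP => [pt'|-> //].
have [s n w e] := has_type_degrees pt; have [s' n' w' e'] := has_type_degrees pt'.
by apply: node_type_degrees_inj; congruence.
Qed.

Lemma seg_ends_in_nodes :
  all (fun s => (seg_start s \in nodes D) && (seg_end s \in nodes D)) D.
Proof.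
rewrite /nodes; under eq_all do rewrite !mem_undup.
elim: D => //= s r IHr; rewrite !inE !eqxx orbT /=.
by apply: sub_all IHr => s'; rewrite !inE => /andP[-> ->]; rewrite !orbT.
Qed.

Lemma size_by_orientation : all (fun s => is_vertical s || is_horizontal s) D ->
  size D = (count (@is_vertical R) D + count (@is_horizontal R) D)%N.
Proof.
rewrite all_count => /eqP <-; rewrite -count_predUI.
suff -> : count (predI (@is_vertical R) (@is_horizontal R)) D = 0%N by rewrite addn0.
rewrite (@eq_count _ _ pred0) ?count_pred0 // => s /=.
by rewrite /is_vertical /is_horizontal; case: eqP => //= ->; rewrite ltxx !andbF.
Qed.

Hypothesis typed : forall p, p \in nodes D -> exists t, has_type a b D p t.

Lemma sum_nodes_by_type (n : R * R -> nat) (d : node_type -> nat) :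
  (forall p t, has_type a b D p t -> n p = d t) ->
  (\sum_(p <- nodes D) n p = \sum_(t <- node_types) d t * Ntype a b D t)%N.
Proof.
move=> nd.
have type_sum p : p \in nodes D ->
    n p = (\sum_(t <- node_types) if has_type a b D p t then d t else 0)%N.
  case/typed => t pt; rewrite -big_mkcond (eq_bigl _ _ (has_type_unique pt)).
  by rewrite -big_filter filter_pred1_node_types big_seq1 (nd _ _ pt).
rewrite (eq_big_seq _ type_sum) exchange_big; apply: eq_bigr => t _.
by rewrite -big_mkcond big_const_seq iter_addn_0 mulnC.
Qed.

Lemma count_by_seg_end (P : pred (segment R)) (d : node_type -> nat) :
  (forall p t, has_type a b D p t -> count (fun s => P s && (seg_end s == p)) D = d t) ->
  count P D = (\sum_(t <- node_types) d t * Ntype a b D t)%N.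
Proof.
move=> Pd; rewrite -(sum_nodes_by_type Pd) sum_count_by_image ?undup_uniq //.
by apply: sub_all seg_ends_in_nodes => s /andP[].
Qed.

Lemma count_by_seg_start (P : pred (segment R)) (d : node_type -> nat) :
  (forall p t, has_type a b D p t -> count (fun s => P s && (seg_start s == p)) D = d t) ->
  count P D = (\sum_(t <- node_types) d t * Ntype a b D t)%N.
Proof.
move=> Pd; rewrite -(sum_nodes_by_type Pd) sum_count_by_image ?undup_uniq //.
by apply: sub_all seg_ends_in_nodes => s /andP[].
Qed.

End Drawing.

Theorem lemma1 (R : realType) (a b : R) (D : seq (segment R)) :
  (0 < a)%R -> (0 < b)%R ->
  is_drawing a b D ->
  (forall p, p \in nodes D -> exists t, has_type a b D p t) ->
  let N := Ntype a b D in
  (2 * size D =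
     (N VE + N VX + 2 * N VT + 3 * N VS + 3 * N VC)
   + (N HE + N HX + 2 * N HT + 3 * N HS + 3 * N HC) + 4 * N CR)%N /\
  (N VE + N HS + N HT = N VX + N HC + N VT)%N /\
  (N HE + N VS + N VT = N HX + N VC + N HT)%N.
Proof.
move=> _ _ [oriented _] typed /=.
have south : count (@is_vertical R) D = \sum_(t <- node_types) south_degree t * Ntype a b D t.
  by apply: (count_by_seg_end typed) => p t /has_type_degrees[].
have north : count (@is_vertical R) D = \sum_(t <- node_types) north_degree t * Ntype a b D t.
  by apply: (count_by_seg_start typed) => p t /has_type_degrees[].
have west : count (@is_horizontal R) D = \sum_(t <- node_types) west_degree t * Ntype a b D t.
  by apply: (count_by_seg_end typed) => p t /has_type_degrees[].
have east : count (@is_horizontal R) D = \sum_(t <- node_types) east_degree t * Ntype a b D t.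
  by apply: (count_by_seg_start typed) => p t /has_type_degrees[].
rewrite (size_by_orientation oriented); move: south north west east.
rewrite !big_cons !big_nil /= !mul0n !mul1n !add0n !addn0; lia.
Qed.
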